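(* Let $\mathscr T$ be a functor satisfying (T1)–(T4) and $\mathfrak K=(K,\bigsqcup,\odot,{}^*,{\sim},e)$ a $\mathscr T$-based orthomodular dynamic algebra. Then $\mathfrak K$, $\mathscr P(\mathscr T(\mathbf{Lin}(\widetilde{\mathfrak K})))$ and $(\mathscr P(\mathscr T(K)),\bigcup,\boxdot,{}^\star,\boxtimes,\{e\})$ are mutually isomorphic $\mathscr T$-based orthomodular dynamic algebras.
   Context: Here $h\colon K\to\mathscr P(\mathscr T(K))$ is $h(v)=\{w\in\mathscr T(K)\mid w\sqsubseteq v\}$, and on the powerset $\mathscr P(\mathscr T(K))$: $A\boxdot B=h(\bigsqcup A\odot\bigsqcup B)$, $A^\star=h((\bigsqcup A)^* )$, $\boxtimes A=h({\sim}\bigsqcup A)$, joins are unions, unit $\{e\}$. $\widetilde{\mathfrak K}$ denotes the complete orthomodular lattice $(\widetilde K,\preceq,{}^\perp)$. An involutive unital quantale is $(Q,\bigsqcup,\odot,{}^*,e)$: complete join-semilattice $Q$ (order $\sqsubseteq$), associative $\odot$ distributing over arbitrary joins in each argument, unit $e$, ${}^*$ with $x^{**}=x$, $(x\odot y)^*=y^*\odot x^*$, $(\bigsqcup x_i)^*=\bigsqcup x_i^*$. An involutive generalized dynamic algebra (IDA) is such a quantale with ${\sim}\colon K\to K$ satisfying, for all $x,y$ and families $(x_i)$: ${\sim}(x\odot{\sim}{\sim}y)={\sim}(x\odot y)$; ${\sim}(\bigsqcup{\sim}{\sim}x_i)={\sim}(\bigsqcup x_i)$; $({\sim}x)^*={\sim}x$;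 ${\sim}{\sim}({\sim}{\sim}x\odot y)={\sim}({\sim}x\sqcup{\sim}({\sim}x\sqcup y))$. Test set $\widetilde K=\{{\sim}k\}$; $\bigvee W={\sim}{\sim}\bigsqcup W$; $w^\perp={\sim}w$; $k\preceq l$ iff $\bigvee\{k,l\}=l$; $k\bullet v={\sim}{\sim}(k\odot v)$; $k\equiv l$ iff $k\bullet w=l\bullet w$ for all $w\in\widetilde K$. IDA morphisms preserve arbitrary joins, $\odot$, ${}^*$, unit, ${\sim}$ (category $\mathbb{IDA}$); isomorphisms are bijective morphisms; semi-Foulis means $(\widetilde K,\preceq,{}^\perp)$ is a complete orthomodular lattice. $\mathbb{IM}$: involutive monoids and homomorphisms. For a complete orthomodular lattice $\mathcal M$: $\pi_m(x)=m\wedge(m^\perp\vee x)$; $\mathbf{Lin}(\mathcal M)$ is the set of maps $f$ admitting $f^*$ with $f(x)\le y^\perp\iff x\le f^*(y)^\perp$, an IDA under pointwise joins, composition, ${}^*$, $\mathrm{id}$, ${\sim}f=\pi_{f(1)^\perp}$. For an involutive submonoid $L\supseteq\{\pi_m\}$, $\mathscr P(L)$ is the IDA of subsets of $L$ with union, setwise composition and involution, unit $\{\mathrm{id}\}$, ${\sim}A=\{\pi_{(\bigvee_{a\in A}a(1))^\perp}\}$. $\mathscr T\colon\mathbb{IDA}\to\mathbb{IM}$ satisfies: (T1) $\widetilde K\subseteq\mathscr T(K)\subseteq K$, $\mathscr T(K)$ an involutive submonoid; (T2) for semi-Foulis $\mathfrak K$ with $s=t\iff s\equiv t$ on $\mathscr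 T(K)$, $k\mapsto k\bullet(-)$ is an isomorphism $\mathscr T(\mathfrak K)\to\mathscr T(\mathbf{Lin}(\widetilde{\mathfrak K}))$; (T3) $f\mapsto\{f\}$ is an isomorphism $\mathscr T(\mathbf{Lin}(\mathcal M))\to\mathscr T(\mathscr P(\mathscr T(\mathbf{Lin}(\mathcal M))))$; (T4) $\mathscr T(f)$ is the restriction of $f$. A $\mathscr T$-based orthomodular dynamic algebra is an IDA with: (TODA1) $(\widetilde K,\preceq,{}^\perp)$ a complete orthomodular lattice; (TODA2) every $A$ with $\mathscr T(K)\subseteq A\subseteq K$ closed under $\odot$, ${}^*$, arbitrary joins equals $K$; (TODA3) for $S,T\subseteq\mathscr T(K)$, $\bigsqcup S=\bigsqcup T$ iff $S=T$; (TODA4) for $s,t\in\mathscr T(K)$, $s=t$ iff $s\equiv t$. *)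

From Stdlib Require Import ClassicalEpsilon.
Set Implicit Arguments.
Unset Strict Implicit.

Definition image {A B : Type} (f : A -> B) (S : A -> Prop) : B -> Prop :=
  fun y => exists x, S x /\ y = f x.
Definition pair2 {A : Type} (x y : A) : A -> Prop := fun z => z = x \/ z = y.

(* Used only where (for the structures the theorem is
   about) the closure property holds; the default is then never reached. *)
Definition mksub {A : Type} (P : A -> Prop) (d : sig P) (x : A) : sig P :=
  match excluded_middle_informative (P x) with
  | left h => exist P x h
  | right _ => d
  end.
Arguments mksub {A} P d x.

(* ---------- raw IDA signature (K, ⊔, ⊙, *, ~, e) ---------- *)
Record IDAops := {
  car :> Type;
  isup : (car -> Prop) -> car;
  imul : car -> car -> car;
  istar : car -> car;
  itld : car -> car;
  iunit : car
}.
Arguments isup : clear implicits.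
Arguments imul : clear implicits.
Arguments istar : clear implicits.
Arguments itld : clear implicits.
Arguments iunit : clear implicits.

Section IDAdefs.
Variable K : IDAops.
Definition ile (x y : K) : Prop := isup K (pair2 x y) = y.
Definition ijoin (x y : K) : K := isup K (pair2 x y).

Record is_IDA : Prop := {
  ile_refl : forall x, ile x x;
  ile_anti : forall x y, ile x y -> ile y x -> x = y;
  ile_trans : forall x y z, ile x y -> ile y z -> ile x z;
  isup_ub : forall S x, S x -> ile x (isup K S);
  isup_least : forall S u, (forall x, S x -> ile x u) -> ile (isup K S) u;
  imul_assoc : forall x y z, imul K x (imul K y z) = imul K (imul K x y) z;
  imul_supr : forall x S, imul K x (isup K S) = isup K (image (imul K x) S);
  imul_supl : forall x S, imul K (isup K S) x = isup K (image (fun y => imul K y x) S);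
  imul_1l : forall x, imul K (iunit K) x = x;
  imul_1r : forall x, imul K x (iunit K) = x;
  istarK : forall x, istar K (istar K x) = x;
  istar_mul : forall x y, istar K (imul K x y) = imul K (istar K y) (istar K x);
  istar_sup : forall S, istar K (isup K S) = isup K (image (istar K) S);
  itld_ax1 : forall x y, itld K (imul K x (itld K (itld K y))) = itld K (imul K x y);
  itld_ax2 : forall S, itld K (isup K (image (fun x => itld K (itld K x)) S))
                       = itld K (isup K S);
  itld_ax3 : forall x, istar K (itld K x) = itld K x;
  itld_ax4 : forall x y, itld K (itld K (imul K (itld K (itld K x)) y))
      = itld K (ijoin (itld K x) (itld K (ijoin (itld K x) y)))
}.
End IDAdefs.

Definition ida_morphism (K L : IDAops) (f : K -> L) : Prop :=
  (forall S, f (isup K S) = isup L (image f S)) /\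
  (forall x y, f (imul K x y) = imul L (f x) (f y)) /\
  (forall x, f (istar K x) = istar L (f x)) /\
  f (iunit K) = iunit L /\
  (forall x, f (itld K x) = itld L (f x)).

Definition ida_iso (K L : IDAops) : Prop :=
  exists f : K -> L, ida_morphism f /\
    (forall x y, f x = f y -> x = y) /\ (forall y, exists x, f x = y).

Record cOL := {
  ocar :> Type;
  ole : ocar -> ocar -> Prop;
  operp : ocar -> ocar;
  osup : (ocar -> Prop) -> ocar
}.
Arguments ole : clear implicits.
Arguments operp : clear implicits.
Arguments osup : clear implicits.

Section OLdefs.
Variable M : cOL.
Definition ojoin (x y : M) : M := osup M (pair2 x y).
Definition omeet (x y : M) : M := operp M (ojoin (operp M x) (operp M y)).
Definition otop : M := osup M (fun _ => True).

Record is_cOML : Prop := {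
  ole_refl : forall x, ole M x x;
  ole_anti : forall x y, ole M x y -> ole M y x -> x = y;
  ole_trans : forall x y z, ole M x y -> ole M y z -> ole M x z;
  osup_ub : forall S x, S x -> ole M x (osup M S);
  osup_least : forall S u, (forall x, S x -> ole M x u) -> ole M (osup M S) u;
  operpK : forall x, operp M (operp M x) = x;
  operp_anti : forall x y, ole M x y -> ole M (operp M y) (operp M x);
  ojoin_perp : forall x, ojoin x (operp M x) = otop;
  orthomodular : forall x y, ole M x y -> y = ojoin x (omeet y (operp M x))
}.

Definition sproj (m : M) : M -> M := fun x => omeet m (ojoin (operp M m) x).

Definition adjointable (f : M -> M) : Prop :=
  exists g : M -> M, forall x y, ole M (f x) (operp M y) <-> ole M x (operp M (g y)).
Definition LinT : Type := { f : M -> M | adjointable f }.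
Definition lin_id : LinT :=
  exist adjointable (fun x => x) (ex_intro (fun g : M -> M => forall x y, ole M x (operp M y) <-> ole M x (operp M (g y))) (fun x => x) (fun x y => iff_refl _)).
Definition mkLin (f : M -> M) : LinT := mksub adjointable lin_id f.
Definition lin_adj (f : LinT) : M -> M :=
  proj1_sig (constructive_indefinite_description _ (proj2_sig f)).

Definition Lin : IDAops := {|
  car := LinT;
  isup := fun F => mkLin (fun x => osup M (fun y => exists f, F f /\ y = proj1_sig f x));
  imul := fun f g => mkLin (fun x => proj1_sig f (proj1_sig g x));
  istar := fun f => mkLin (lin_adj f);
  itld := fun f => mkLin (sproj (operp M (proj1_sig f otop)));
  iunit := lin_id
|}.

Section PL.
Variable L : LinT -> Prop.
Definition PLT : Type := { A : LinT -> Prop | forall a, A a -> L a }.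
Definition PL_empty : PLT :=
  exist (fun A : LinT -> Prop => forall a, A a -> L a) (fun _ => False) (fun a (h : False) => False_ind _ h).
Definition mkPL (A : LinT -> Prop) : PLT :=
  mksub (fun A : LinT -> Prop => forall a, A a -> L a) PL_empty A.
Definition PL : IDAops := {|
  car := PLT;
  isup := fun FF => mkPL (fun a => exists A, FF A /\ proj1_sig A a);
  imul := fun A B => mkPL (fun c => exists a b,
            proj1_sig A a /\ proj1_sig B b /\ c = imul Lin a b);
  istar := fun A => mkPL (fun c => exists a, proj1_sig A a /\ c = istar Lin a);
  itld := fun A => mkPL (fun c => c = mkLin (sproj (operp M
            (osup M (fun y => exists a, proj1_sig A a /\ y = proj1_sig a otop)))));
  iunit := mkPL (fun c => c = lin_id)
|}.
Definition PL_single (f : LinT) : PLT := mkPL (fun g => g = f).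
End PL.
End OLdefs.

Section Tests.
Variable K : IDAops.
Definition is_test (x : K) : Prop := exists k, x = itld K k.
Definition TestT : Type := { x : K | is_test x }.
Definition tsup (W : TestT -> Prop) : TestT :=
  exist is_test (itld K (itld K (isup K (image (@proj1_sig _ _) W))))
        (ex_intro _ _ eq_refl).
Definition tperp (w : TestT) : TestT :=
  exist is_test (itld K (proj1_sig w)) (ex_intro _ _ eq_refl).
Definition tle (k l : TestT) : Prop := proj1_sig (tsup (pair2 k l)) = proj1_sig l.
Definition TestOL : cOL := {| ocar := TestT; ole := tle; operp := tperp; osup := tsup |}.

Definition bullet (k : K) (v : TestT) : TestT :=
  exist is_test (itld K (itld K (imul K k (proj1_sig v)))) (ex_intro _ _ eq_refl).
Definition tequiv (k l : K) : Prop := forall w : TestT, bullet k w = bullet l w.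
End Tests.

(* ---------- functors 𝒯 : IDA → IM (object part is a subset 𝒯(K) ⊆ K) ---------- *)
Definition Tfun : Type := forall K : IDAops, K -> Prop.

Definition LinTest (K : IDAops) : IDAops := Lin (TestOL K).

Definition T1 (T : Tfun) : Prop :=
  forall K : IDAops, is_IDA K ->
    (forall x, is_test x -> T K x) /\
    (forall x y, T K x -> T K y -> T K (imul K x y)) /\
    (forall x, T K x -> T K (istar K x)) /\
    T K (iunit K).

Definition T2 (T : Tfun) : Prop :=
  forall K : IDAops, is_IDA K -> is_cOML (TestOL K) ->
    (forall s t, T K s -> T K t -> (s = t <-> tequiv s t)) ->
    let phi := fun k : K => @mkLin (TestOL K) (bullet k) in
    (forall k, T K k -> @adjointable (TestOL K) (bullet k) /\ T (LinTest K) (phi k)) /\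
    (forall k l, T K k -> T K l -> phi k = phi l -> k = l) /\
    (forall g, T (LinTest K) g -> exists k, T K k /\ phi k = g) /\
    (forall k l, T K k -> T K l -> phi (imul K k l) = imul (LinTest K) (phi k) (phi l)) /\
    (forall k, T K k -> phi (istar K k) = istar (LinTest K) (phi k)) /\
    phi (iunit K) = iunit (LinTest K).

Definition T3 (T : Tfun) : Prop :=
  forall M : cOL, is_cOML M ->
    let L := T (Lin M) in
    let P := PL L in
    let psi := fun f => PL_single L f in
    (forall f, L f -> T P (psi f)) /\
    (forall f g, L f -> L g -> psi f = psi g -> f = g) /\
    (forall A, T P A -> exists f, L f /\ psi f = A) /\
    (forall f g, L f -> L g -> psi (imul (Lin M) f g) = imul P (psi f) (psi g)) /\
    (forall f, L f -> psi (istar (Lin M) f) = istar P (psi f)) /\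
    psi (iunit (Lin M)) = iunit P.

(* (T4): 𝒯(f) is the restriction of f (in particular f maps 𝒯(K) into 𝒯(L)) *)
Definition T4 (T : Tfun) : Prop :=
  forall (K L : IDAops) (f : K -> L), is_IDA K -> is_IDA L -> ida_morphism f ->
    forall x, T K x -> T L (f x).

Definition TODA (T : Tfun) (K : IDAops) : Prop :=
  is_IDA K /\
  is_cOML (TestOL K) /\
  (forall A : K -> Prop,
                 (forall x, T K x -> A x) ->
                 (forall x y, A x -> A y -> A (imul K x y)) ->
                 (forall x, A x -> A (istar K x)) ->
                 (forall S, (forall x, S x -> A x) -> A (isup K S)) ->
                 forall x, A x) /\
  (forall S U : K -> Prop,
                 (forall x, S x -> T K x) -> (forall x, U x -> T K x) ->
                 (isup K S = isup K U <-> (forall x, S x <-> U x))) /\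
  (forall s t, T K s -> T K t -> (s = t <-> tequiv s t)).

Definition PTKT (T : Tfun) (K : IDAops) : Type :=
  { A : K -> Prop | forall x, A x -> T K x }.
Definition PTK_empty (T : Tfun) (K : IDAops) : PTKT T K :=
  exist (fun A : K -> Prop => forall x, A x -> T K x) (fun _ => False)
        (fun x (h : False) => False_ind _ h).
Definition mkPTK (T : Tfun) (K : IDAops) (A : K -> Prop) : PTKT T K :=
  mksub (fun A : K -> Prop => forall x, A x -> T K x) (PTK_empty T K) A.
Arguments mkPTK : clear implicits.
Arguments PTK_empty : clear implicits.
Definition hK (T : Tfun) (K : IDAops) (v : K) : PTKT T K :=
  exist (fun A : K -> Prop => forall x, A x -> T K x)
        (fun w => T K w /\ @ile K w v) (fun w (h : T K w /\ @ile K w v) => proj1 h).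
Arguments hK : clear implicits.
Definition PTK (T : Tfun) (K : IDAops) : IDAops := {|
  car := PTKT T K;
  isup := fun FF => mkPTK T K (fun x => exists A, FF A /\ proj1_sig A x);
  imul := fun A B => hK T K (imul K (isup K (proj1_sig A)) (isup K (proj1_sig B)));
  istar := fun A => hK T K (istar K (isup K (proj1_sig A)));
  itld := fun A => hK T K (itld K (isup K (proj1_sig A)));
  iunit := mkPTK T K (fun x => x = iunit K)
|}.

Definition PTLin (T : Tfun) (K : IDAops) : IDAops := PL (T (LinTest K)).

From Stdlib Require Import FunctionalExtensionality PropExtensionality ProofIrrelevance.
From Stdlib Require Import ClassicalEpsilon.

(* Since 𝒯(K) generates K under ⊙, * and joins (TODA2) and distinct subsets of 𝒯(K) have
   distinct joins (TODA3), every v is the join of h(v) = {w ∈ 𝒯(K) | w ⊑ v}, and h(v) is the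
   only subset of 𝒯(K) with join v.  So h is a bijection K → 𝒫(𝒯(K)), and it is an IDA
   isomorphism because the operations of 𝒫(𝒯(K)) are h of the operations on joins.  Taking
   direct images along the isomorphism k ↦ k • (-) of (T2) turns h into an isomorphism onto
   𝒫(𝒯(Lin K̃)); it respects ∼ because on a test m, m • (-) is the Sasaki projection π_m.
   Finally the TODA axioms pass along IDA isomorphisms, which by (T4) restrict to bijections
   between the 𝒯-parts. *)

Lemma sig_ext {A : Type} {P : A -> Prop} (a b : sig P) : proj1_sig a = proj1_sig b -> a = b.
Proof. apply eq_sig_hprop; intros; apply proof_irrelevance. Qed.

Lemma pred_ext {A : Type} (P Q : A -> Prop) : (forall x, P x <-> Q x) -> P = Q.
Proof.
  intros H; apply functional_extensionality; intros x; apply propositional_extensionality; auto.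
Qed.

Lemma mksub_val {A : Type} (P : A -> Prop) (d : sig P) (x : A) : P x -> proj1_sig (mksub P d x) = x.
Proof. intros Px; unfold mksub; destruct excluded_middle_informative; simpl; tauto. Qed.

Lemma image_comp {A B C : Type} (h1 : A -> B) (h2 : B -> C) (S : A -> Prop) :
  image h2 (image h1 S) = image (fun x => h2 (h1 x)) S.
Proof.
  apply pred_ext; intros z; split.
  - intros [y [[x [Sx ->]] ->]]; exists x; auto.
  - intros [x [Sx ->]]; exists (h1 x); split; auto; exists x; auto.
Qed.

Lemma image_ext {A B : Type} {h1 h2 : A -> B} (S : A -> Prop) :
  (forall x, h1 x = h2 x) -> image h1 S = image h2 S.
Proof.
  intros H; apply pred_ext; intros z; split; intros [x [Sx ->]]; exists x; rewrite ?H; auto.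
Qed.

Lemma image_id {A : Type} (S : A -> Prop) : image (fun x => x) S = S.
Proof. apply pred_ext; intros z; split; [intros [x [Sx ->]] | exists z]; auto. Qed.

Lemma image_pair {A B : Type} (h : A -> B) (x y : A) : image h (pair2 x y) = pair2 (h x) (h y).
Proof.
  apply pred_ext; intros z; split.
  - intros [w [[-> | ->] ->]]; red; auto.
  - intros [-> | ->]; [exists x | exists y]; split; auto; red; auto.
Qed.

Lemma image_inj_iff {A B : Type} {h : A -> B} (S U : A -> Prop) :
  (forall x y, h x = h y -> x = y) ->
  (forall z, image h S z <-> image h U z) <-> (forall x, S x <-> U x).
Proof.
  intros h_inj; split; intros H.
  - intros x; split; intros Hx;
      [destruct (proj1 (H (h x))) as [y [Uy E]] | destruct (proj2 (H (h x))) as [y [Sy E]]];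
      try (exists x; auto); apply h_inj in E; subst; auto.
  - intros z; split; intros [x [Hx ->]]; exists x; split; auto; apply H; auto.
Qed.

Section IDAFacts.
Context {K : IDAops}.
Hypothesis HK : is_IDA K.

Lemma isup_single (x : K) : isup K (fun z => z = x) = x.
Proof.
  apply (ile_anti HK).
  - apply (isup_least HK); intros z ->; apply (ile_refl HK).
  - apply (isup_ub HK); reflexivity.
Qed.

Lemma isup_mono (P Q : K -> Prop) : (forall x, P x -> Q x) -> ile (isup K P) (isup K Q).
Proof. intros H; apply (isup_least HK); intros x Px; apply (isup_ub HK); auto. Qed.

Lemma isup_union {I : Type} (F : I -> K -> Prop) (FF : I -> Prop) :
  isup K (fun x => exists i, FF i /\ F i x) = isup K (image (fun i => isup K (F i)) FF).
Proof.
  apply (ile_anti HK); apply (isup_least HK).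
  - intros x [i [Fi Hx]]; apply (ile_trans HK) with (isup K (F i)).
    + apply (isup_ub HK); auto.
    + apply (isup_ub HK); exists i; auto.
  - intros _ [i [Fi ->]]; apply isup_mono; intros x Hx; exists i; auto.
Qed.

Lemma imul_isup (S U : K -> Prop) :
  imul K (isup K S) (isup K U) = isup K (fun z => exists s u, S s /\ U u /\ z = imul K s u).
Proof.
  apply (ile_anti HK).
  - rewrite (imul_supl HK); apply (isup_least HK); intros _ [s [Ss ->]].
    rewrite (imul_supr HK); apply (isup_least HK); intros _ [u [Uu ->]].
    apply (isup_ub HK); exists s, u; auto.
  - apply (isup_least HK); intros _ [s [u [Ss [Uu ->]]]].
    apply (ile_trans HK) with (imul K s (isup K U)).
    + rewrite (imul_supr HK); apply (isup_ub HK); exists u; auto.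
    + rewrite (imul_supl HK (isup K U)); apply (isup_ub HK); exists s; auto.
Qed.

Lemma itld3 (x : K) : itld K (itld K (itld K x)) = itld K x.
Proof. pose proof (itld_ax1 HK (iunit K) x) as H; rewrite !(imul_1l HK) in H; exact H. Qed.

End IDAFacts.

Lemma ida_morphism_ijoin {K L : IDAops} {f : K -> L} :
  ida_morphism f -> forall x y, f (ijoin x y) = ijoin (f x) (f y).
Proof. intros [f_sup _] x y; unfold ijoin; rewrite f_sup, image_pair; reflexivity. Qed.

Section Embedding.
Context {K L : IDAops} {g : L -> K}.
Hypothesis Hg : ida_morphism g.
Hypothesis g_inj : forall x y, g x = g y -> x = y.

Let g_sup := proj1 Hg.
Let g_mul := proj1 (proj2 Hg).
Let g_star := proj1 (proj2 (proj2 Hg)).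
Let g_unit := proj1 (proj2 (proj2 (proj2 Hg))).
Let g_tld := proj2 (proj2 (proj2 (proj2 Hg))).

Lemma ile_embedding (x y : L) : ile x y <-> ile (g x) (g y).
Proof.
  unfold ile; rewrite <- image_pair, <- g_sup; split; intros H.
  - rewrite H; reflexivity.
  - apply g_inj; exact H.
Qed.

Lemma is_IDA_embedding : is_IDA K -> is_IDA L.
Proof.
  intros HK.
  assert (image_g_tld2 : forall S, image g (image (fun x => itld L (itld L x)) S)
                                   = image (fun x => itld K (itld K x)) (image g S)).
  { intros S; rewrite !image_comp; apply image_ext; intros x; rewrite !g_tld; reflexivity. }
  constructor; intros; rewrite ?ile_embedding in *; try apply g_inj;
    repeat (rewrite g_sup || rewrite g_mul || rewrite g_star || rewrite g_unit
            || rewrite g_tld || rewrite (ida_morphism_ijoin Hg)).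
  - apply (ile_refl HK).
  - apply (ile_anti HK); auto.
  - apply (ile_trans HK) with (g y); auto.
  - apply (isup_ub HK); exists x; auto.
  - apply (isup_least HK); intros _ [x [Sx ->]]; apply ile_embedding; auto.
  - apply (imul_assoc HK).
  - rewrite image_comp, (imul_supr HK), image_comp.
    apply f_equal, image_ext; intros; symmetry; apply g_mul.
  - rewrite image_comp, (imul_supl HK), image_comp.
    apply f_equal, image_ext; intros; symmetry; apply g_mul.
  - apply (imul_1l HK).
  - apply (imul_1r HK).
  - apply (istarK HK).
  - apply (istar_mul HK).
  - rewrite image_comp, (istar_sup HK), image_comp.
    apply f_equal, image_ext; intros; symmetry; apply g_star.
  - apply (itld_ax1 HK).
  - rewrite image_g_tld2; apply (itld_ax2 HK).
  - apply (itld_ax3 HK).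
  - apply (itld_ax4 HK).
Qed.

End Embedding.

Lemma ida_morphism_comp {K L N : IDAops} {f : K -> L} {h : L -> N} :
  ida_morphism f -> ida_morphism h -> ida_morphism (fun x => h (f x)).
Proof.
  intros (f_sup & f_mul & f_star & f_unit & f_tld) (h_sup & h_mul & h_star & h_unit & h_tld).
  repeat split; intros;
    rewrite ?f_sup, ?f_mul, ?f_star, ?f_unit, ?f_tld, ?h_sup, ?h_mul, ?h_star, ?h_unit, ?h_tld,
      ?image_comp; reflexivity.
Qed.

Definition ida_isomorphism {K L : IDAops} (f : K -> L) (g : L -> K) : Prop :=
  ida_morphism f /\ (forall x, g (f x) = x) /\ (forall y, f (g y) = y).

Lemma ida_morphism_inverse {K L : IDAops} {f : K -> L} {g : L -> K} :
  ida_isomorphism f g -> ida_morphism g.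
Proof.
  intros ((f_sup & f_mul & f_star & f_unit & f_tld) & gf & fg).
  assert (f_inj : forall x y, f x = f y -> x = y) by (intros x y E; rewrite <- (gf x), E; auto).
  repeat split; intros; apply f_inj;
    rewrite ?f_sup, ?f_mul, ?f_star, ?f_unit, ?f_tld, ?fg; auto.
  rewrite image_comp, (image_ext S fg), image_id; auto.
Qed.

Lemma ida_isomorphism_sym {K L : IDAops} {f : K -> L} {g : L -> K} :
  ida_isomorphism f g -> ida_isomorphism g f.
Proof. intros Hfg; pose proof (ida_morphism_inverse Hfg); firstorder. Qed.

Lemma ida_isomorphism_comp {K L N : IDAops} {f : K -> L} {g : L -> K} {h : L -> N} {k : N -> L} :
  ida_isomorphism f g -> ida_isomorphism h k ->
  ida_isomorphism (fun x => h (f x)) (fun z => g (k z)).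
Proof.
  intros (Hf & gf & fg) (Hh & kh & hk); split; [apply ida_morphism_comp; auto | split].
  - intros x; rewrite kh, gf; auto.
  - intros z; rewrite fg, hk; auto.
Qed.

Lemma ida_iso_intro {K L : IDAops} {f : K -> L} {g : L -> K} :
  ida_isomorphism f g -> ida_iso K L.
Proof.
  intros (Hf & gf & fg); exists f; split; [auto | split].
  - intros x y E; rewrite <- (gf x), E; auto.
  - intros y; exists (g y); auto.
Qed.

Section OMLEmbedding.
Context {M N : cOL} (a : N -> M).
Hypothesis a_inj : forall x y, a x = a y -> x = y.
Hypothesis a_surj : forall y, exists x, a x = y.
Hypothesis a_le : forall x y, ole N x y <-> ole M (a x) (a y).
Hypothesis a_perp : forall x, a (operp N x) = operp M (a x).
Hypothesis a_sup : forall S, a (osup N S) = osup M (image a S).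

Lemma ojoin_embedding x y : a (ojoin x y) = ojoin (a x) (a y).
Proof. unfold ojoin; rewrite a_sup, image_pair; reflexivity. Qed.

Lemma omeet_embedding x y : a (omeet x y) = omeet (a x) (a y).
Proof. unfold omeet; rewrite a_perp, ojoin_embedding, !a_perp; reflexivity. Qed.

Lemma otop_embedding : a (otop N) = otop M.
Proof.
  unfold otop; rewrite a_sup; f_equal; apply pred_ext; intros y; split; auto.
  intros _; destruct (a_surj y) as [x <-]; exists x; auto.
Qed.

Lemma is_cOML_embedding : is_cOML M -> is_cOML N.
Proof.
  intros HM; constructor; intros; rewrite ?a_le in *; try apply a_inj;
    rewrite ?a_sup, ?ojoin_embedding, ?omeet_embedding, ?otop_embedding, ?a_perp.
  - apply (ole_refl HM).
  - apply (ole_anti HM); auto.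
  - apply (ole_trans HM) with (a y); auto.
  - apply (osup_ub HM); exists x; auto.
  - apply (osup_least HM); intros _ [x [Sx ->]]; apply a_le; auto.
  - apply (operpK HM).
  - apply (operp_anti HM); auto.
  - apply (ojoin_perp HM).
  - apply (orthomodular HM); auto.
Qed.

End OMLEmbedding.

Section TestMap.
Context {K L : IDAops} {f : K -> L}.
Hypothesis Hf : ida_morphism f.

Let f_tld := proj2 (proj2 (proj2 (proj2 Hf))).

Lemma is_test_morphism {x} : is_test x -> is_test (f x).
Proof. intros [k ->]; exists (f k); apply f_tld. Qed.

Definition test_map (t : TestT K) : TestT L :=
  exist (@is_test L) (f (proj1_sig t)) (is_test_morphism (proj2_sig t)).

Lemma test_map_perp t : test_map (tperp t) = tperp (test_map t).
Proof. apply sig_ext; apply f_tld. Qed.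

Lemma test_map_sup W : test_map (tsup W) = tsup (image test_map W).
Proof.
  apply sig_ext; simpl; rewrite !f_tld, (proj1 Hf), !image_comp; reflexivity.
Qed.

Lemma test_map_bullet k w : test_map (bullet k w) = bullet (f k) (test_map w).
Proof. apply sig_ext; simpl; rewrite !f_tld, (proj1 (proj2 Hf)); reflexivity. Qed.

Hypothesis f_inj : forall x y, f x = f y -> x = y.

Lemma test_map_inj s t : test_map s = test_map t -> s = t.
Proof. intros E; apply sig_ext, f_inj; exact (f_equal (@proj1_sig _ _) E). Qed.

Lemma test_map_le s t : tle s t <-> tle (test_map s) (test_map t).
Proof.
  unfold tle; rewrite <- image_pair, <- test_map_sup; simpl; split; intros E.
  - rewrite E; reflexivity.
  - apply f_inj; exact E.
Qed.

Hypothesis f_surj : forall y, exists x, f x = y.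

Lemma test_map_surj t : exists s, test_map s = t.
Proof.
  destruct t as [y [l ->]]; destruct (f_surj l) as [k <-].
  exists (exist (@is_test K) (itld K k) (ex_intro _ k eq_refl)); apply sig_ext; apply f_tld.
Qed.

Lemma test_cOML_embedding : is_cOML (TestOL L) -> is_cOML (TestOL K).
Proof.
  apply (@is_cOML_embedding (TestOL L) (TestOL K) test_map);
    [exact test_map_inj | exact test_map_surj | exact test_map_le
    | exact test_map_perp | exact test_map_sup].
Qed.

Lemma tequiv_embedding s t : tequiv s t <-> tequiv (f s) (f t).
Proof.
  unfold tequiv; split; intros E w.
  - destruct (test_map_surj w) as [v <-]; rewrite <- !test_map_bullet, E; reflexivity.
  - apply test_map_inj; rewrite !test_map_bullet; apply E.
Qed.

End TestMap.

Section TODATransport.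
Variable T : Tfun.
Hypothesis HT4 : T4 T.
Context {K L : IDAops} {f : K -> L} {g : L -> K}.
Hypothesis Hfg : ida_isomorphism f g.
Hypothesis HK : is_IDA K.

Let Hf : ida_morphism f := proj1 Hfg.
Let Hg : ida_morphism g := ida_morphism_inverse Hfg.
Let gf : forall x, g (f x) = x := proj1 (proj2 Hfg).
Let fg : forall y, f (g y) = y := proj2 (proj2 Hfg).

Let g_inj x y : g x = g y -> x = y.
Proof. intros E; rewrite <- (fg x), E; auto. Qed.

Let g_surj x : exists y, g y = x.
Proof. exists (f x); auto. Qed.

Let HL : is_IDA L := is_IDA_embedding Hg g_inj HK.

Lemma T_embedding y : T L y <-> T K (g y).
Proof.
  split; intros Ty.
  - exact (HT4 L K g HL HK Hg y Ty).
  - rewrite <- (fg y); exact (HT4 K L f HK HL Hf _ Ty).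
Qed.

Lemma TODA_transport : TODA T K -> TODA T L.
Proof.
  intros (_ & HO & generated & sup_inj & T_eq).
  pose proof Hf as (f_sup & f_mul & f_star & _).
  pose proof Hg as (g_sup & _).
  split; [exact HL | split; [exact (test_cOML_embedding Hg g_inj g_surj HO) | split; [| split]]].
  - intros A A_T A_mul A_star A_sup y; rewrite <- (fg y).
    apply (generated (fun x => A (f x))).
    + intros x Tx; apply A_T, T_embedding; rewrite gf; exact Tx.
    + intros x z Ax Az; rewrite f_mul; auto.
    + intros x Ax; rewrite f_star; auto.
    + intros S HS; rewrite f_sup; apply A_sup; intros _ [x [Sx ->]]; auto.
  - intros S U S_T U_T.
    rewrite <- (image_inj_iff S U g_inj), <- sup_inj
      by (intros _ [y [Hy ->]]; apply T_embedding; auto).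
    rewrite <- !g_sup; split; [intros ->; reflexivity | apply g_inj].
  - intros s t Ts Tt; apply T_embedding in Ts, Tt.
    rewrite (tequiv_embedding Hg g_inj g_surj), <- T_eq by assumption.
    split; [intros ->; reflexivity | apply g_inj].
Qed.

End TODATransport.

Record join_basis {K : IDAops} {B : K -> Prop} : Prop := {
  basis_mul : forall x y, B x -> B y -> B (imul K x y);
  basis_star : forall x, B x -> B (istar K x);
  basis_generates : forall A : K -> Prop,
    (forall x, B x -> A x) ->
    (forall x y, A x -> A y -> A (imul K x y)) ->
    (forall x, A x -> A (istar K x)) ->
    (forall S, (forall x, S x -> A x) -> A (isup K S)) ->
    forall x, A x;
  basis_sup_inj : forall S U : K -> Prop,
    (forall x, S x -> B x) -> (forall x, U x -> B x) ->
    (isup K S = isup K U <-> (forall x, S x <-> U x))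
}.
Arguments join_basis {K} B.

Lemma TODA_join_basis {T : Tfun} {K : IDAops} : T1 T -> TODA T K -> join_basis (T K).
Proof.
  intros HT1 (HK & _ & generated & sup_inj & _); destruct (HT1 K HK) as (_ & T_mul & T_star & _).
  split; assumption.
Qed.

Definition down {K : IDAops} (B : K -> Prop) (v : K) : K -> Prop := fun w => B w /\ ile w v.

Section JoinBasis.
Context {K : IDAops} {B : K -> Prop}.
Hypothesis HK : is_IDA K.
Hypothesis HB : join_basis B.

Lemma join_of_basis v : exists P, (forall x, P x -> B x) /\ isup K P = v.
Proof.
  apply (basis_generates HB (fun v => exists P, (forall x, P x -> B x) /\ isup K P = v)).
  - intros x Bx; exists (fun z => z = x); split; [intros z ->; auto | apply (isup_single HK)].
  - intros x y [P [HP <-]] [Q [HQ <-]]; rewrite (imul_isup HK).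
    eexists; split; [| reflexivity].
    intros _ [s [u [Ps [Qu ->]]]]; apply (basis_mul HB); auto.
  - intros x [P [HP <-]]; rewrite (istar_sup HK); eexists; split; [| reflexivity].
    intros _ [s [Ps ->]]; apply (basis_star HB); auto.
  - intros S HS.
    exists (fun w => exists P, ((forall x, P x -> B x) /\ S (isup K P)) /\ P w); split.
    + intros w [P [[HP _] Pw]]; auto.
    + rewrite (isup_union HK); apply (ile_anti HK); apply (isup_least HK).
      * intros _ [P [[_ SP] ->]]; apply (isup_ub HK); auto.
      * intros s Ss; destruct (HS s Ss) as [P [HP <-]]; apply (isup_ub HK); exists P; auto.
Qed.

Lemma isup_down v : isup K (down B v) = v.
Proof.
  apply (ile_anti HK).
  - apply (isup_least HK); intros w [_ H]; auto.
  - destruct (join_of_basis v) as [P [HP <-]]; apply (isup_mono HK).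
    intros w Pw; split; auto; apply (isup_ub HK); auto.
Qed.

Lemma down_unique P v : (forall x, P x -> B x) -> isup K P = v -> P = down B v.
Proof.
  intros HP <-; apply pred_ext, (basis_sup_inj HB); auto.
  - intros x [Bx _]; auto.
  - rewrite isup_down; reflexivity.
Qed.

Lemma down_basis {t} : B t -> down B t = (fun w => w = t).
Proof. intros Bt; symmetry; apply down_unique; [intros x ->; auto | apply (isup_single HK)]. Qed.

Lemma down_isup S : down B (isup K S) = (fun w => exists s, S s /\ down B s w).
Proof.
  symmetry; apply down_unique; [intros w [s [_ [Bw _]]]; auto |].
  rewrite (isup_union HK), (image_ext S isup_down), image_id; reflexivity.
Qed.

Lemma down_imul x y :
  down B (imul K x y) = (fun w => exists k l, down B x k /\ down B y l /\ w = imul K k l).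
Proof.
  symmetry; apply down_unique.
  - intros w [k [l [[Bk _] [[Bl _] ->]]]]; apply (basis_mul HB); auto.
  - rewrite <- (imul_isup HK), !isup_down; reflexivity.
Qed.

Lemma down_istar x : down B (istar K x) = image (istar K) (down B x).
Proof.
  symmetry; apply down_unique.
  - intros w [k [[Bk _] ->]]; apply (basis_star HB); auto.
  - rewrite <- (istar_sup HK), isup_down; reflexivity.
Qed.

End JoinBasis.

Section PowersetOfT.
Variable T : Tfun.
Context {K : IDAops}.
Hypothesis HK : is_IDA K.
Hypothesis HB : join_basis (T K).
Hypothesis T_unit : T K (iunit K).

Definition PTK_join (A : PTK T K) : K := isup K (proj1_sig A).

Lemma mkPTK_val (A : K -> Prop) : (forall x, A x -> T K x) -> proj1_sig (mkPTK T K A) = A.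
Proof. intros HA; exact (mksub_val _ _ _ HA). Qed.

Lemma PTK_join_hK v : PTK_join (hK T K v) = v.
Proof. exact (isup_down HK HB v). Qed.

Lemma hK_PTK_join A : hK T K (PTK_join A) = A.
Proof. apply sig_ext; symmetry; apply (down_unique HK HB); [apply (proj2_sig A) | reflexivity]. Qed.

Lemma PTK_join_morphism : ida_morphism PTK_join.
Proof.
  (* Apart from unions and the unit, each operation of 𝒫(𝒯(K)) is h of the operation on joins. *)
  repeat split; intros; try apply PTK_join_hK; unfold PTK_join; simpl.
  - rewrite mkPTK_val; [apply (isup_union HK) | intros x [A [_ Ax]]; apply (proj2_sig A); auto].
  - rewrite mkPTK_val; [apply (isup_single HK) | intros x ->; auto].
Qed.

Lemma hK_isomorphism : ida_isomorphism (L := PTK T K) (hK T K) PTK_join.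
Proof.
  apply ida_isomorphism_sym.
  split; [exact PTK_join_morphism | split; [exact hK_PTK_join | exact PTK_join_hK]].
Qed.

End PowersetOfT.

Section OMLFacts.
Context {M : cOL}.
Hypothesis HM : is_cOML M.

Lemma ojoin_le {x y : M} : ole M x y -> ojoin x y = y.
Proof.
  intros H; apply (ole_anti HM).
  - apply (osup_least HM); intros z [-> | ->]; auto; apply (ole_refl HM).
  - apply (osup_ub HM); right; reflexivity.
Qed.

Lemma operp_otop_le (x : M) : ole M (operp M (otop M)) x.
Proof.
  rewrite <- (operpK HM x); apply (operp_anti HM), (osup_ub HM); exact I.
Qed.

Lemma sproj_otop : sproj (otop M) = fun x => x.
Proof.
  apply functional_extensionality; intros x; unfold sproj, omeet.
  rewrite (ojoin_le (operp_otop_le x)), (ojoin_le (operp_otop_le _)), (operpK HM); reflexivity.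
Qed.

End OMLFacts.

Lemma bullet_test {K : IDAops} (HK : is_IDA K) (m : TestT K) :
  bullet (proj1_sig m) = @sproj (TestOL K) m.
Proof.
  apply functional_extensionality; intros x; apply sig_ext.
  destruct m as [_ [k ->]]; simpl; repeat (rewrite image_pair; simpl); rewrite !(itld3 HK).
  rewrite <- (itld3 HK k) at 1; apply (itld_ax4 HK).
Qed.

(* [itld] of [PL L] maps [A] to the singleton of the Sasaki projection onto this test. *)
Definition sasaki_index {M : cOL} (A : LinT M -> Prop) : M :=
  operp M (osup M (fun y => exists a, A a /\ y = proj1_sig a (otop M))).

Definition lin_bullet {K : IDAops} (k : K) : LinT (TestOL K) := @mkLin (TestOL K) (bullet k).

Section BulletRepresentation.
Variable T : Tfun.
Hypothesis HT1 : T1 T.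
Hypothesis HT2 : T2 T.
Context {K : IDAops}.
Hypothesis HTODA : TODA T K.

Let HK : is_IDA K := proj1 HTODA.
Let HB : join_basis (T K) := TODA_join_basis HT1 HTODA.
Let T_test : forall x, is_test x -> T K x := proj1 (HT1 K HK).
Let T_unit : T K (iunit K) := proj2 (proj2 (proj2 (HT1 K HK))).
Let T2K := HT2 K HK (proj1 (proj2 HTODA)) (proj2 (proj2 (proj2 (proj2 HTODA)))).

Lemma lin_bullet_adjointable k : T K k -> @adjointable (TestOL K) (bullet k).
Proof. intros Tk; apply (proj1 T2K k Tk). Qed.

Lemma T_lin_bullet k : T K k -> T (LinTest K) (lin_bullet k).
Proof. intros Tk; apply (proj1 T2K k Tk). Qed.

Lemma lin_bullet_inj k l : T K k -> T K l -> lin_bullet k = lin_bullet l -> k = l.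
Proof. destruct T2K as (_ & inj & _); exact (inj k l). Qed.

Lemma lin_bullet_surj g : T (LinTest K) g -> exists k, T K k /\ lin_bullet k = g.
Proof. destruct T2K as (_ & _ & surj & _); exact (surj g). Qed.

Lemma lin_bullet_mul k l : T K k -> T K l ->
  lin_bullet (imul K k l) = imul (LinTest K) (lin_bullet k) (lin_bullet l).
Proof. destruct T2K as (_ & _ & _ & mul & _); exact (mul k l). Qed.

Lemma lin_bullet_star k : T K k -> lin_bullet (istar K k) = istar (LinTest K) (lin_bullet k).
Proof. destruct T2K as (_ & _ & _ & _ & star & _); exact (star k). Qed.

Lemma lin_bullet_unit : lin_bullet (iunit K) = iunit (LinTest K).
Proof. destruct T2K as (_ & _ & _ & _ & _ & unit); exact unit. Qed.

Lemma lin_bullet_val k : T K k -> proj1_sig (lin_bullet k) = bullet k.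
Proof. intros Tk; apply mksub_val, lin_bullet_adjointable, Tk. Qed.

(* [lin_bullet] is injective on 𝒯(K) and sends both sides to the identity, by [bullet_test]
   and [sproj_otop]. *)
Lemma otop_test_unit : proj1_sig (otop (TestOL K)) = iunit K.
Proof.
  apply lin_bullet_inj; [apply T_test, (proj2_sig (otop (TestOL K))) | exact T_unit |].
  rewrite lin_bullet_unit; unfold lin_bullet.
  rewrite (bullet_test HK), (sproj_otop (proj1 (proj2 HTODA))).
  apply sig_ext, mksub_val, (proj2_sig (lin_id (TestOL K))).
Qed.

Lemma bullet_otop k : proj1_sig (bullet k (otop (TestOL K))) = itld K (itld K k).
Proof. unfold bullet; cbn [proj1_sig]; rewrite otop_test_unit, (imul_1r HK); reflexivity. Qed.

Definition lin_rep (v : K) : PTLin T K :=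
  mkPL (T (LinTest K)) (image lin_bullet (down (T K) v)).

Definition lin_join (A : PTLin T K) : K :=
  isup K (fun k => T K k /\ proj1_sig A (lin_bullet k)).

Lemma lin_rep_val v : proj1_sig (lin_rep v) = image lin_bullet (down (T K) v).
Proof. apply mksub_val; intros _ [k [[Tk _] ->]]; apply T_lin_bullet, Tk. Qed.

Lemma lin_rep_eq v (X : LinT (TestOL K) -> Prop) :
  (forall c, image lin_bullet (down (T K) v) c <-> X c) -> lin_rep v = mkPL (T (LinTest K)) X.
Proof. intros H; unfold lin_rep; f_equal; apply pred_ext, H. Qed.

Lemma lin_rep_isup S : lin_rep (isup K S) = isup (PTLin T K) (image lin_rep S).
Proof.
  apply lin_rep_eq; intros c; rewrite (down_isup HK HB); split.
  - intros [k [[s [Ss Hk]] ->]]; exists (lin_rep s); split; [exists s; auto |].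
    rewrite lin_rep_val; exists k; auto.
  - intros [A [[s [Ss ->]] Hc]]; rewrite lin_rep_val in Hc; destruct Hc as [k [Hk ->]].
    exists k; split; auto; exists s; auto.
Qed.

Lemma lin_rep_imul x y : lin_rep (imul K x y) = imul (PTLin T K) (lin_rep x) (lin_rep y).
Proof.
  apply lin_rep_eq; intros c; rewrite (down_imul HK HB), !lin_rep_val; split.
  - intros [_ [[k [l [Hk [Hl ->]]]] ->]]; exists (lin_bullet k), (lin_bullet l).
    split; [exists k; auto | split; [exists l; auto |]].
    apply lin_bullet_mul; [apply Hk | apply Hl].
  - intros [_ [_ [[k [Hk ->]] [[l [Hl ->]] ->]]]].
    exists (imul K k l); split; [exists k, l; auto |].
    symmetry; apply lin_bullet_mul; [apply Hk | apply Hl].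
Qed.

Lemma lin_rep_istar x : lin_rep (istar K x) = istar (PTLin T K) (lin_rep x).
Proof.
  apply lin_rep_eq; intros c; rewrite (down_istar HK HB), lin_rep_val; split.
  - intros [_ [[k [Hk ->]] ->]]; exists (lin_bullet k); split; [exists k; auto |].
    apply lin_bullet_star, Hk.
  - intros [_ [[k [Hk ->]] ->]]; exists (istar K k); split; [exists k; auto |].
    symmetry; apply lin_bullet_star, Hk.
Qed.

Lemma lin_rep_iunit : lin_rep (iunit K) = iunit (PTLin T K).
Proof.
  apply lin_rep_eq; intros c; rewrite (down_basis HK HB T_unit); split.
  - intros [k [-> ->]]; apply lin_bullet_unit.
  - intros ->; exists (iunit K); split; [reflexivity | symmetry; apply lin_bullet_unit].
Qed.

Lemma lin_rep_sasaki_index v : proj1_sig (sasaki_index (proj1_sig (lin_rep v))) = itld K v.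
Proof.
  cbn [sasaki_index operp osup TestOL tperp tsup proj1_sig]; rewrite (itld3 HK).
  transitivity (itld K (isup K (image (fun x => itld K (itld K x)) (down (T K) v))));
    [| rewrite (itld_ax2 HK), (isup_down HK HB); reflexivity].
  do 2 f_equal; apply pred_ext; intros z; split.
  - intros [y [[a [Ha ->]] ->]]; rewrite lin_rep_val in Ha; destruct Ha as [k [Hk ->]].
    exists k; split; auto; rewrite lin_bullet_val by apply Hk; apply bullet_otop.
  - intros [k [Hk ->]]; exists (bullet k (otop (TestOL K))).
    split; [| symmetry; apply bullet_otop].
    exists (lin_bullet k); rewrite lin_rep_val, lin_bullet_val by apply Hk.
    split; [exists k |]; auto.
Qed.

Lemma lin_rep_itld v : lin_rep (itld K v) = itld (PTLin T K) (lin_rep v).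
Proof.
  apply lin_rep_eq; intros c; fold (sasaki_index (proj1_sig (lin_rep v))).
  rewrite <- (bullet_test HK), lin_rep_sasaki_index.
  rewrite (down_basis HK HB (T_test (itld K v) (ex_intro _ v eq_refl))).
  split; [intros [k [-> ->]] | intros ->; exists (itld K v)]; auto.
Qed.

Lemma lin_rep_morphism : ida_morphism lin_rep.
Proof.
  repeat split; intros;
    [apply lin_rep_isup | apply lin_rep_imul | apply lin_rep_istar | apply lin_rep_iunit
    | apply lin_rep_itld].
Qed.

Lemma lin_join_rep v : lin_join (lin_rep v) = v.
Proof.
  unfold lin_join; rewrite lin_rep_val.
  transitivity (isup K (down (T K) v)); [f_equal | apply (isup_down HK HB)].
  apply pred_ext; intros k; split.
  - intros [Tk [l [Hl E]]]; apply lin_bullet_inj in E; [subst; auto | auto | apply Hl].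
  - intros [Tk Hk]; split; auto; exists k; split; [split |]; auto.
Qed.

Lemma lin_rep_join A : lin_rep (lin_join A) = A.
Proof.
  assert (down_join : down (T K) (lin_join A) = fun k => T K k /\ proj1_sig A (lin_bullet k)).
  { symmetry; apply (down_unique HK HB); [intros k [Tk _]; exact Tk | reflexivity]. }
  apply sig_ext; rewrite lin_rep_val, down_join.
  apply pred_ext; intros c; split.
  - intros [k [[Tk Ak] ->]]; exact Ak.
  - intros Ac; destruct (lin_bullet_surj c (proj2_sig A c Ac)) as [k [Tk <-]].
    exists k; auto.
Qed.

Lemma lin_rep_isomorphism : ida_isomorphism lin_rep lin_join.
Proof. split; [exact lin_rep_morphism | split; [exact lin_join_rep | exact lin_rep_join]]. Qed.

End BulletRepresentation.

Theorem corollary6p4 :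
  forall T : Tfun, T1 T -> T2 T -> T3 T -> T4 T ->
  forall K : IDAops, TODA T K ->
    TODA T K /\ TODA T (PTLin T K) /\ TODA T (PTK T K) /\
    ida_iso K (PTLin T K) /\ ida_iso K (PTK T K) /\
    ida_iso (PTLin T K) (PTK T K).
Proof.
  intros T HT1 HT2 _ HT4 K HTODA.
  pose proof (proj1 HTODA) as HK.
  pose proof (lin_rep_isomorphism T HT1 HT2 HTODA) as iso_lin.
  pose proof (hK_isomorphism T HK (TODA_join_basis HT1 HTODA)
                (proj2 (proj2 (proj2 (HT1 K HK))))) as iso_pow.
  pose proof (ida_isomorphism_comp (ida_isomorphism_sym iso_lin) iso_pow) as iso_lin_pow.
  split; [exact HTODA |].
  split; [exact (TODA_transport T HT4 iso_lin HK HTODA) |].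
  split; [exact (TODA_transport T HT4 iso_pow HK HTODA) |].
  split; [exact (ida_iso_intro iso_lin) |].
  split; [exact (ida_iso_intro iso_pow) |].
  exact (ida_iso_intro iso_lin_pow).
Qed.
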